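(* Let $G=(V,E)$ be a finite graph with a biclique partition $B_1=L_1\times R_1,\dots,B_m=L_m\times R_m$ of its edges, and let $\mathbb{G}=\{h_1,\dots,h_m\}\subseteq\{0,1,\star\}^V$ where $h_i(v)=0$ for $v\in L_i$, $h_i(v)=1$ for $v\in R_i$, $h_i(v)=\star$ otherwise. Let $\overline{\mathbb{G}}\subseteq\{0,1\}^V$ be any disambiguation of $\mathbb{G}$. Then the number of distinct vectors $(\bar h(v))_{\bar h\in\overline{\mathbb{G}}}$, $v\in V$, is at least $\chi(G)$; consequently, if $d$ is the VC dimension of the dual class $\overline{\mathbb{G}}^\top$ (the class of functions $\bar h\mapsto\bar h(v)$ on $\overline{\mathbb{G}}$, one for each $v\in V$), then $\chi(G)\le\sum_{i=0}^{d}\binom{|\overline{\mathbb{G}}|}{i}$.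
   Context: A disambiguation of a partial class $\mathbb{H}\subseteq\{0,1,\star\}^V$ on finite $V$ is a total class $\overline{\mathbb{H}}\subseteq\{0,1\}^V$ such that for every $h\in\mathbb{H}$ there is $\bar h\in\overline{\mathbb{H}}$ with $\bar h(v)=h(v)$ for all $v\in h^{-1}(\{0,1\})$. A biclique partition of $G$ is a family of complete bipartite subgraphs $L_i\times R_i$ (edges $\{u,v\}$, $u\in L_i$, $v\in R_i$) whose edge sets partition $E$. $\chi(G)$ is the chromatic number. The VC dimension of a total class is the largest size of a set on which all $0/1$ patterns are realized. *)

From mathcomp Require Import all_boot.
Set Implicit Arguments. Unset Strict Implicit. Unset Printing Implicit Defensive.

(* A finite simple graph: vertex type V : finType, edge relation e : rel V
   assumed symmetric and irreflexive (hypotheses of the theorem). *)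

Definition colorable (V : finType) (e : rel V) (k : nat) : bool :=
  [exists f : {ffun V -> 'I_k}, [forall u, forall v, e u v ==> (f u != f v)]].

Lemma colorable_card (V : finType) (e : rel V) :
  irreflexive e -> exists k, colorable e k.
Proof.
move=> irr; exists #|V|; apply/existsP; exists [ffun v => enum_rank v].
apply/forallP => u; apply/forallP => v; apply/implyP => euv.
rewrite !ffunE; apply/negP => /eqP /enum_rank_inj Huv.
by rewrite Huv irr in euv.
Qed.

Definition chi (V : finType) (e : rel V) (irr : irreflexive e) : nat :=
  ex_minn (colorable_card irr).

Definition in_biclique (V : finType) (L R : {set V}) (u v : V) : bool :=
  ((u \in L) && (v \in R)) || ((v \in L) && (u \in R)).

Definition biclique_partition (V : finType) (e : rel V) (m : nat)
    (L R : 'I_m -> {set V}) : Prop :=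
  (forall i u v, u \in L i -> v \in R i -> e u v) /\
  (forall u v, e u v -> #|[set i | in_biclique (L i) (R i) u v]| = 1).

(* partial concept h_i : V -> {0,1,star}; None = star, Some false = 0,
   Some true = 1 *)
Definition hpart (V : finType) (L R : {set V}) (v : V) : option bool :=
  if v \in L then Some false else if v \in R then Some true else None.

Definition disambiguation (V : finType) (m : nat) (h : 'I_m -> V -> option bool)
    (Gbar : {set {ffun V -> bool}}) : Prop :=
  forall i, exists2 hb, hb \in Gbar & forall v b, h i v = Some b -> hb v = b.

(* the dual function of v, as a vector indexed by Gbar
   (extended by false outside Gbar) *)
Definition dual_vec (V : finType) (Gbar : {set {ffun V -> bool}}) (v : V)
    : {ffun {ffun V -> bool} -> bool} :=
  [ffun hb => (hb \in Gbar) && hb v].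

Definition num_dual_vecs (V : finType) (Gbar : {set {ffun V -> bool}}) : nat :=
  #|[set dual_vec Gbar v | v : V]|.

Definition dual_shatters (V : finType) (Gbar : {set {ffun V -> bool}})
    (S : {set {ffun V -> bool}}) : bool :=
  (S \subset Gbar) &&
  [forall p : {ffun {ffun V -> bool} -> bool},
     [exists v : V, [forall hb in S, hb v == p hb]]].

Definition dual_VCdim (V : finType) (Gbar : {set {ffun V -> bool}}) : nat :=
  \max_(S : {set {ffun V -> bool}} | dual_shatters Gbar S) #|S|.

From mathcomp Require Import all_boot.
Set Implicit Arguments. Unset Strict Implicit. Unset Printing Implicit Defensive.

(* Map every vertex v to its dual vector (hb v)_{hb in Gbar}.  If uv is an
   edge, it lies in some biclique L_i x R_i, and the disambiguation hb of h_i
   takes the value 0 on one endpoint and 1 on the other; hence adjacent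
   vertices have distinct dual vectors, and colouring each vertex by its dual
   vector is a proper colouring with num_dual_vecs Gbar colours.  This is the
   first inequality.
   For the second one we bound the number of dual vectors, viewed as a class
   of Boolean functions on the domain {ffun V -> bool}, by the Sauer-Shelah
   lemma.  We prove it in Pajor's form (a finite class F has at most as many
   members as it has shattered sets, by induction on #|F|, splitting F
   according to the value at a point), then count the shattered sets: every
   set shattered by the dual vectors lies in Gbar and is shattered in the
   sense of dual_shatters, so its size is at most dual_VCdim Gbar. *)

Section Pajor.

Variable T : finType.
Implicit Types (F : {set {ffun T -> bool}}) (S : {set T}).

Definition shattered F S : bool :=
  [forall p : {ffun T -> bool}, [exists f in F, [forall x in S, f x == p x]]].

Definition true_at (x : T) : {set {ffun T -> bool}} := [set f : {ffun T -> bool} | f x].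

Lemma shattered_mono F1 F2 S : F1 \subset F2 -> shattered F1 S -> shattered F2 S.
Proof.
move=> sF12 /forallP shS; apply/forallP => p.
have /existsP [f /andP [fF1 fp]] := shS p.
by apply/existsP; exists f; rewrite (subsetP sF12).
Qed.

Lemma shattered_set0 F f : f \in F -> shattered F set0.
Proof.
move=> fF; apply/forallP => p; apply/existsP; exists f.
by rewrite fF; apply/forallP => x; rewrite inE.
Qed.

Lemma shattered_const F S (x : T) (b : bool) :
  {in F, forall f : {ffun T -> bool}, f x = b} -> shattered F S -> x \notin S.
Proof.
move=> Fxb /forallP /(_ [ffun _ => ~~ b]) /existsP [f /andP [fF /forallP fp]].
by apply/negP => xS; move: (fp x); rewrite xS ffunE Fxb //; case: (b).
Qed.

Lemma shattered_setU1 F S (x : T) :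
  shattered (F :&: true_at x) S -> shattered (F :\: true_at x) S ->
  shattered F (x |: S).
Proof.
move=> /forallP sh1 /forallP sh0; apply/forallP => p.
have [f fFx fp] : exists2 f,
      (f \in F) && (f x == p x) & [forall y in S, f y == p y].
  case px: (p x).
  - have /existsP [f /andP [fF fp]] := sh1 p.
    by exists f => //; move: fF; rewrite !inE => /andP [-> ->].
  - have /existsP [f /andP [fF fp]] := sh0 p.
    by exists f => //; move: fF; rewrite !inE => /andP [/negbTE -> ->].
case/andP: fFx => fF fxp; apply/existsP; exists f; rewrite fF /=.
apply/forallP => y; rewrite !inE; case: eqP => [-> //| _] /=.
exact: (forallP fp y).
Qed.

(* One induction step of Pajor's lemma: splitting F according to the value
   at x, the shattered sets of the two halves inject into those of F. *)
Lemma shattered_split F (x : T) :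
  #|[set S | shattered (F :&: true_at x) S]| +
  #|[set S | shattered (F :\: true_at x) S]| <= #|[set S | shattered F S]|.
Proof.
set A1 := [set S | shattered (F :&: true_at x) S].
set A0 := [set S | shattered (F :\: true_at x) S].
have notin1 S : S \in A1 -> x \notin S.
  by rewrite inE; apply: (@shattered_const _ _ _ true) => f; rewrite !inE => /andP [].
have notin0 S : S \in A0 -> x \notin S.
  rewrite inE; apply: (@shattered_const _ _ _ false) => f.
  by rewrite !inE => /andP [/negbTE].
pose B := [set x |: S | S in A1 :&: A0].
have cardB : #|B| = #|A1 :&: A0|.
  apply: card_in_imset => S1 S2; rewrite !in_setI => /andP [/notin1 xS1 _].
  by case/andP => /notin1 xS2 _ eqS; rewrite -(setU1K xS1) -(setU1K xS2) eqS.
have disjB : [disjoint A1 :|: A0 & B].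
  apply/pred0P => S /=; apply/negP => /andP [].
  by rewrite in_setU => /orP [/notin1|/notin0] xS /imsetP [S' _ eqS];
    rewrite eqS setU11 in xS.
have subB : (A1 :|: A0) :|: B \subset [set S | shattered F S].
  apply/subsetP => S; rewrite !in_setU => /orP [/orP [] shS|/imsetP [S' ]].
  - by rewrite !inE in shS *; apply: shattered_mono shS; apply: subsetIl.
  - by rewrite !inE in shS *; apply: shattered_mono shS; apply: subsetDl.
  by rewrite !inE => /andP [sh1 sh0] ->; apply: shattered_setU1.
rewrite -cardsUI -cardB (leq_trans _ (subset_leq_card subB)) //.
by rewrite [X in _ <= X]cardsU (disjoint_setI0 disjB) cards0 subn0.
Qed.

Lemma pajor F : #|F| <= #|[set S | shattered F S]|.
Proof.
have [n leFn] := ubnP #|F|; elim: n => // n IHn in F leFn *.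
case: (leqP #|F| 1) => [F_le1 | /card_gt1P [f [g [fF gF fg]]]].
  have [-> | [f fF]] := set_0Vmem F; first by rewrite cards0.
  apply: leq_trans F_le1 _; apply/card_gt0P; exists set0.
  by rewrite inE (shattered_set0 fF).
have [x [t [u [tF uF tx ux]]]] :
    exists x, exists t u, [/\ t \in F, u \in F, t x & ~~ u x].
  have [x fgx] : exists x, f x != g x.
    apply/existsP; apply: contraR fg => /existsPn fg; apply/eqP/ffunP => x.
    by apply/eqP; have := fg x; rewrite negbK.
  exists x; move: fgx; case fx: (f x); case gx: (g x) => // _.
  - by exists f, g; rewrite fx gx.
  - by exists g, f; rewrite fx gx.
have splitF := cardsID (true_at x) F.
have F1_lt : #|F :&: true_at x| < #|F|.
  rewrite -splitF -[X in X < _]addn0 ltn_add2l; apply/card_gt0P.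
  by exists u; rewrite /true_at !inE uF ux.
have F0_lt : #|F :\: true_at x| < #|F|.
  rewrite -splitF -[X in X < _]add0n ltn_add2r; apply/card_gt0P.
  by exists t; rewrite /true_at !inE tF tx.
rewrite -splitF (leq_trans _ (shattered_split F x)) // leq_add // IHn //.
  exact: leq_trans F1_lt leFn.
exact: leq_trans F0_lt leFn.
Qed.

End Pajor.

Lemma card_small_subsets (U : finType) (G : {set U}) (k : nat) :
  #|[set S : {set U} | (S \subset G) && (#|S| < k)]| <= \sum_(i < k) 'C(#|G|, i).
Proof.
elim: k => [|k IHk].
  by rewrite big_ord0 leqn0 cards_eq0; apply/eqP/setP => S; rewrite !inE ltn0 andbF.
rewrite big_ord_recr /= -cards_draws (leq_trans _ (leq_add IHk (leqnn _))) //.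
apply: leq_trans (leq_card_setU _ _); apply: subset_leq_card; apply/subsetP => S.
by rewrite !inE ltnS leq_eqVlt => /andP [-> /orP [] ->]; rewrite ?orbT.
Qed.

Lemma sauer_shelah (T : finType) (F : {set {ffun T -> bool}}) (G : {set T}) (d : nat) :
  (forall S, shattered F S -> S \subset G /\ #|S| <= d) ->
  #|F| <= \sum_(i < d.+1) 'C(#|G|, i).
Proof.
move=> shF; apply: leq_trans (pajor F) (leq_trans _ (card_small_subsets G d.+1)).
apply: subset_leq_card; apply/subsetP => S; rewrite !inE => /shF [-> leSd].
by rewrite ltnS.
Qed.

Lemma chi_le (V : finType) (e : rel V) (irr : irreflexive e) (k : nat) :
  colorable e k -> chi irr <= k.
Proof. by rewrite /chi; case: ex_minnP => n _ minn /minn. Qed.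

Lemma colorable_image (V W : finType) (e : rel V) (c : V -> W) :
  (forall u v, e u v -> c u != c v) -> colorable e #|[set c v | v : V]|.
Proof.
move=> c_sep; apply/existsP; case: (pickP (@predT V)) => [v0 _ | V0].
  have cv0 : c v0 \in [set c v | v : V] by apply: imset_f.
  exists [ffun v => enum_rank_in cv0 (c v)].
  apply/forallP => u; apply/forallP => v; apply/implyP => euv; rewrite !ffunE.
  apply: contra (c_sep u v euv) => /eqP /(congr1 enum_val).
  by rewrite !enum_rankK_in ?imset_f // => ->.
have /card_gt0P [f _] : 0 < #|{ffun V -> 'I_#|[set c v | v : V]|}|.
  by rewrite card_ffun (eq_card0 V0).
by exists f; apply/forallP => u; have := V0 u.
Qed.

Section DualClass.

Variables (V : finType) (Gbar : {set {ffun V -> bool}}).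

Lemma dual_vec_sep (hb : {ffun V -> bool}) (u v : V) :
  hb \in Gbar -> hb u != hb v -> dual_vec Gbar u != dual_vec Gbar v.
Proof.
by move=> hbG; apply: contra => /eqP /ffunP /(_ hb); rewrite !ffunE hbG /= => ->.
Qed.

Lemma shattered_dual (S : {set {ffun V -> bool}}) :
  shattered [set dual_vec Gbar v | v : V] S -> dual_shatters Gbar S.
Proof.
move=> /forallP shS.
have SG : S \subset Gbar.
  apply/subsetP => hb hbS.
  have /existsP [_ /andP [/imsetP [v _ ->] /forallP vS]] :=
    shS [ffun _ : {ffun V -> bool} => true].
  by have := implyP (vS hb) hbS; rewrite !ffunE => /eqP /andP [].
rewrite /dual_shatters SG; apply/forallP => p.
have /existsP [_ /andP [/imsetP [v _ ->] /forallP vp]] := shS p.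
apply/existsP; exists v; apply/forallP => hb; apply/implyP => hbS.
by have := implyP (vp hb) hbS; rewrite ffunE (subsetP SG).
Qed.

Lemma dual_shatters_card (S : {set {ffun V -> bool}}) :
  dual_shatters Gbar S -> #|S| <= dual_VCdim Gbar.
Proof. exact: (@leq_bigmax_cond _ (dual_shatters Gbar) (fun S => #|S|) S). Qed.

End DualClass.

Section Biclique.

Variables (V : finType) (e : rel V) (m : nat) (L R : 'I_m -> {set V}).
Hypothesis irr : irreflexive e.
Hypothesis hB : biclique_partition e L R.

Lemma biclique_sides_disjoint (i : 'I_m) (w : V) : w \in L i -> w \notin R i.
Proof. by move=> wL; apply/negP => /(hB.1 i w w wL); rewrite irr. Qed.

(* A disambiguation of h_i is 0 on L_i and 1 on R_i, hence separates them. *)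
Lemma disambiguation_sep (hb : {ffun V -> bool}) (i : 'I_m) (u v : V) :
  (forall w b, hpart (L i) (R i) w = Some b -> hb w = b) ->
  u \in L i -> v \in R i -> hb u != hb v.
Proof.
move=> hbE uL vR; rewrite (hbE u false) ?(hbE v true) // /hpart ?uL ?vR //.
by rewrite ifN // (contra (@biclique_sides_disjoint i v)) ?vR.
Qed.

Lemma biclique_dual_proper (Gbar : {set {ffun V -> bool}}) :
  disambiguation (fun i => hpart (L i) (R i)) Gbar ->
  forall u v, e u v -> dual_vec Gbar u != dual_vec Gbar v.
Proof.
move=> hD u v euv.
have /card_gt0P [i] : 0 < #|[set i | in_biclique (L i) (R i) u v]| by rewrite hB.2.
have [hb hbG hbE] := hD i.
rewrite inE /in_biclique => /orP [] /andP [sL sR]; apply: (dual_vec_sep hbG).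
  exact: disambiguation_sep hbE sL sR.
by rewrite eq_sym; apply: disambiguation_sep hbE sL sR.
Qed.

End Biclique.

Theorem mainTheorem8 (V : finType) (e : rel V)
    (sym : symmetric e) (irr : irreflexive e)
    (m : nat) (L R : 'I_m -> {set V})
    (hB : biclique_partition e L R)
    (Gbar : {set {ffun V -> bool}})
    (hD : disambiguation (fun i => hpart (L i) (R i)) Gbar) :
  chi irr <= num_dual_vecs Gbar /\
  chi irr <= \sum_(i < (dual_VCdim Gbar).+1) 'C(#|Gbar|, i).
Proof.
have chi_le_dual : chi irr <= num_dual_vecs Gbar.
  exact/chi_le/colorable_image/(biclique_dual_proper irr hB hD).
split=> //; apply: leq_trans chi_le_dual (sauer_shelah _) => S /shattered_dual shS.
by split; [case/andP: shS | apply: dual_shatters_card].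
Qed.
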